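(* Let $\lambda>0$ be fixed and let $f(v,\lambda)$ be a self-paced regularizer (as defined in the context), with associated optimal weight function $v^{\ast}(\ell,\lambda)$, $\ell\ge 0$. Define $$F_{\lambda}(\ell)=\int_{0}^{\ell} v^{\ast}(l,\lambda)\,dl,\qquad \ell\ge 0.$$ Let $\ell(\mathbf{w})\ge 0$ be a loss depending on a model parameter $\mathbf{w}$. Then for every fixed $\mathbf{w}^{\ast}$ and every $\mathbf{w}$, $$F_{\lambda}(\ell(\mathbf{w}))\le Q_{\lambda}(\mathbf{w}\,|\,\mathbf{w}^{\ast}) := F_{\lambda}(\ell(\mathbf{w}^{\ast}))+v^{\ast}(\ell(\mathbf{w}^{\ast}),\lambda)\bigl(\ell(\mathbf{w})-\ell(\mathbf{w}^{\ast})\bigr).$$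
   Context: A function $f(v,\lambda)$ of a weight variable $v\in[0,1]$ and an age parameter $\lambda>0$ is called a self-paced regularizer (SP-regularizer) if: (1) $f(v,\lambda)$ is convex with respect to $v\in[0,1]$; (2) $v^{\ast}(\ell,\lambda)$ is monotonically decreasing with respect to the loss value $\ell\ge 0$, with $\lim_{\ell\to 0}v^{\ast}(\ell,\lambda)=1$ and $\lim_{\ell\to\infty}v^{\ast}(\ell,\lambda)=0$; (3) $v^{\ast}(\ell,\lambda)$ is monotonically increasing with respect to $\lambda$, with $\lim_{\lambda\to\infty}v^{\ast}(\ell,\lambda)\le 1$ and $\lim_{\lambda\to 0}v^{\ast}(\ell,\lambda)=0$; where $v^{\ast}(\ell,\lambda)=\arg\min_{v\in[0,1]}\bigl(v\ell+f(v,\lambda)\bigr)$ is the optimal weight (treated as a function of $\ell$ and $\lambda$, i.e. a chosen minimizer). Loss values $\ell$ are nonnegative real numbers. *)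

From Stdlib Require Import Reals.
From Coquelicot Require Import Coquelicot.
Open Scope R_scope.

(* f : R -> R -> R is f(v, lambda); vstar : R -> R -> R is vstar(l, lambda),
   a chosen minimizer of  v * l + f v lambda  over v in [0,1]. *)

Definition convex_on_01 (g : R -> R) : Prop :=
  forall v1 v2 t, 0 <= v1 <= 1 -> 0 <= v2 <= 1 -> 0 <= t <= 1 ->
    g (t * v1 + (1 - t) * v2) <= t * g v1 + (1 - t) * g v2.

Definition is_optimal_weight (f : R -> R -> R) (vstar : R -> R -> R) : Prop :=
  forall l lam, 0 <= l -> 0 < lam ->
    0 <= vstar l lam <= 1 /\
    forall v, 0 <= v <= 1 -> vstar l lam * l + f (vstar l lam) lam <= v * l + f v lam.

Definition SP_regularizer (f : R -> R -> R) (vstar : R -> R -> R) : Prop :=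
  is_optimal_weight f vstar /\
  (forall lam, 0 < lam -> convex_on_01 (fun v => f v lam)) /\
  (forall lam, 0 < lam ->
     (forall l1 l2, 0 <= l1 -> l1 <= l2 -> vstar l2 lam <= vstar l1 lam) /\
     filterlim (fun l => vstar l lam) (at_right 0) (locally 1) /\
     filterlim (fun l => vstar l lam) (Rbar_locally p_infty) (locally 0)) /\
  (forall l, 0 < l ->
     (forall lam1 lam2, 0 < lam1 -> lam1 <= lam2 -> vstar l lam1 <= vstar l lam2) /\
     (exists L, L <= 1 /\
        filterlim (fun lam => vstar l lam) (Rbar_locally p_infty) (locally L)) /\
     filterlim (fun lam => vstar l lam) (at_right 0) (locally 0)).

(* F_lambda(l) = int_0^l vstar(x, lambda) dx  (Riemann integral; vstar is monotone
   in its first argument, hence Riemann integrable on compact intervals). *)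
Definition F_lam (vstar : R -> R -> R) (lam l : R) : R :=
  RInt (fun x => vstar x lam) 0 l.

(** F_lam is a primitive of the nonincreasing function l |-> v*(l, lam), hence concave, so
    it lies below its tangent lines: F(B) - F(A) = int_A^B v* <= v*(A) (B - A) on either
    side of A.  The remaining work is the Riemann integrability of monotone functions:
    d * floor (g / d) is a uniform d-approximation of g, and for nonincreasing g
    it is a finite sum of indicators of initial segments of [a, b], which are integrable. *)
From Stdlib Require Import Reals Lra Lia ZArith.
From Coquelicot Require Import Coquelicot.
Open Scope R_scope.

Definition nonincreasing_on (g : R -> R) (a b : R) : Prop :=
  forall x y, a <= x -> x <= y -> y <= b -> g y <= g x.

Lemma Int_part_le_compat (u v : R) : u <= v -> (Int_part u <= Int_part v)%Z.
Proof.
  intros Huv.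
  destruct (base_Int_part u) as [Hu _]. destruct (base_Int_part v) as [_ Hv].
  assert (IZR (Int_part u) < IZR (Int_part v + 1)) by (rewrite plus_IZR; lra).
  apply lt_IZR in H. lia.
Qed.

Lemma ex_RInt_superlevel_indicator (g : R -> R) (a b y : R) :
  a <= b -> nonincreasing_on g a b ->
  ex_RInt (fun t => if Rle_dec y (g t) then 1 else 0) a b.
Proof.
  intros Hab Hg.
  set (E := fun t => t = a \/ (a <= t <= b /\ y <= g t)).
  assert (HE : bound E) by (exists b; intros t [->|[Ht _]]; lra).
  destruct (completeness E HE (ex_intro _ a (or_introl eq_refl))) as [c [Hub Hlub]].
  assert (Hac : a <= c) by (apply Hub; left; reflexivity).
  assert (Hcb : c <= b) by (apply Hlub; intros t [->|[Ht _]]; lra).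
  apply ex_RInt_Chasles with c.
  - apply ex_RInt_ext with (fun _ => 1); [|apply ex_RInt_const].
    rewrite Rmin_left, Rmax_right by lra. intros t Ht.
    destruct (Rle_dec y (g t)) as [_|Hnot]; [reflexivity|]. exfalso.
    assert (c <= t); [|lra].
    apply Hlub. intros u [->|[Hu Hyu]]; [lra|].
    destruct (Rle_dec u t) as [|Htu]; [assumption|].
    exfalso. apply Hnot. apply Rle_trans with (g u); [exact Hyu|]. apply Hg; lra.
  - apply ex_RInt_ext with (fun _ => 0); [|apply ex_RInt_const].
    rewrite Rmin_left, Rmax_right by lra. intros t Ht.
    destruct (Rle_dec y (g t)) as [Hy|]; [|reflexivity].
    exfalso. assert (t <= c) by (apply Hub; right; split; [lra|exact Hy]). lra.
Qed.

Lemma ex_RInt_nonincreasing_int_valued (z0 : Z) (k : nat) :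
  forall (g : R -> R) (a b : R), a <= b -> nonincreasing_on g a b ->
  (forall t, a <= t <= b -> exists z, (z0 <= z <= z0 + Z.of_nat k)%Z /\ g t = IZR z) ->
  ex_RInt g a b.
Proof.
  induction k as [|k IH]; intros g a b Hab Hg Hval.
  - apply ex_RInt_ext with (fun _ => IZR z0); [|apply ex_RInt_const].
    rewrite Rmin_left, Rmax_right by lra. intros t Ht.
    destruct (Hval t ltac:(lra)) as [z [Hz ->]]. f_equal. lia.
  - set (low := IZR (z0 + Z.of_nat k)).
    set (top := IZR (z0 + Z.of_nat (S k))).
    assert (Htop : top = low + 1).
    { unfold top, low. rewrite <- succ_IZR. f_equal. lia. }
    (* On integer values, g = min g low + [top <= g]. *)
    apply ex_RInt_ext with
      (fun t => plus (Rmin (g t) low) (if Rle_dec top (g t) then 1 else 0)).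
    + rewrite Rmin_left, Rmax_right by lra. intros t Ht.
      destruct (Hval t ltac:(lra)) as [z [Hz ->]]. unfold plus; simpl.
      destruct (Z.eq_dec z (z0 + Z.of_nat (S k))) as [->|Hne].
      * fold top. rewrite Rmin_right by lra.
        destruct (Rle_dec top top); lra.
      * assert (Hz_low : IZR z <= low) by (apply IZR_le; lia).
        rewrite Rmin_left by lra.
        destruct (Rle_dec top (IZR z)); lra.
    + apply (ex_RInt_plus (V := R_NormedModule) (fun t => Rmin (g t) low)
               (fun t => if Rle_dec top (g t) then 1 else 0)).
      * apply IH; [exact Hab| |].
        -- intros x y Hx Hxy Hy. pose proof (Hg x y Hx Hxy Hy).
           unfold Rmin. repeat destruct Rle_dec; lra.
        -- intros t Ht. destruct (Hval t Ht) as [z [Hz ->]].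
           exists (Z.min z (z0 + Z.of_nat k)). split; [lia|].
           unfold low. destruct (Z.le_ge_cases z (z0 + Z.of_nat k)) as [Hle|Hge].
           ++ rewrite Z.min_l, Rmin_left by (try apply IZR_le; lia). reflexivity.
           ++ rewrite Z.min_r, Rmin_right by (try apply IZR_le; lia). reflexivity.
      * apply ex_RInt_superlevel_indicator; assumption.
Qed.

Lemma ex_RInt_uniform_limit (g : R -> R) (h : R -> R -> R) (a b : R) :
  (forall d, 0 < d -> ex_RInt (h d) a b) ->
  (forall d t, 0 < d -> Rabs (h d t - g t) <= d) ->
  ex_RInt g a b.
Proof.
  intros Hint Happrox.
  set (d := fun n : nat => / INR (S n)).
  assert (Hd : forall n, 0 < d n) by (intros n; apply Rinv_0_lt_compat, lt_0_INR; lia).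
  destruct (filterlim_RInt (fun n => h (d n)) a b eventually _ g
              (fun n => RInt (h (d n)) a b)) as [I [_ HI]].
  - intros n. apply RInt_correct, Hint, Hd.
  - apply filterlim_locally. intros eps.
    destruct (archimed_cor1 eps (cond_pos eps)) as [N [HN HN0]].
    exists N. intros n Hn t.
    assert (Hdn : d n <= / INR N).
    { apply Rinv_le_contravar; [apply lt_0_INR; exact HN0|]. apply le_INR. lia. }
    pose proof (Happrox (d n) t (Hd n)).
    change (Rabs (h (d n) t - g t) < eps). lra.
  - exists I. exact HI.
Qed.

Lemma ex_RInt_nonincreasing (g : R -> R) (a b : R) :
  a <= b -> nonincreasing_on g a b -> ex_RInt g a b.
Proof.
  intros Hab Hg.
  apply (ex_RInt_uniform_limit g (fun d t => d * IZR (Int_part (g t / d)))).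
  - intros d Hd.
    set (level := fun u => Int_part (u / d)).
    assert (Hlevel : forall u v, u <= v -> (level u <= level v)%Z).
    { intros u v Huv. apply Int_part_le_compat. unfold Rdiv.
      apply Rmult_le_compat_r; [left; apply Rinv_0_lt_compat|]; assumption. }
    apply (ex_RInt_scal (fun t => IZR (level (g t))) a b d).
    apply (ex_RInt_nonincreasing_int_valued (level (g b))
             (Z.to_nat (level (g a) - level (g b)))); [exact Hab| |].
    + intros x y Hx Hxy Hy. apply IZR_le, Hlevel, Hg; assumption.
    + intros t Ht. exists (level (g t)). split; [|reflexivity].
      pose proof (Hlevel _ _ (Hg t b ltac:(lra) ltac:(lra) ltac:(lra))).
      pose proof (Hlevel _ _ (Hg a t ltac:(lra) ltac:(lra) ltac:(lra))).
      rewrite Z2Nat.id by lia. lia.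
  - intros d t Hd. destruct (base_Int_part (g t / d)) as [Hlo Hhi].
    assert (Hgt : g t = d * (g t / d)) by (field; lra).
    apply Rabs_le. split.
    + assert (d * (g t / d) < d * (IZR (Int_part (g t / d)) + 1))
        by (apply Rmult_lt_compat_l; lra). lra.
    + assert (d * IZR (Int_part (g t / d)) <= d * (g t / d))
        by (apply Rmult_le_compat_l; lra). lra.
Qed.

Lemma RInt_le_tangent (v : R -> R) (A B : R) :
  ex_RInt v A B -> nonincreasing_on v (Rmin A B) (Rmax A B) ->
  RInt v A B <= v A * (B - A).
Proof.
  intros Hint Hv.
  destruct (Rle_dec A B) as [Hle|Hlt].
  - rewrite Rmin_left, Rmax_right in Hv by lra.
    apply Rle_trans with (RInt (fun _ => v A) A B).
    + apply RInt_le; [exact Hle | exact Hint | apply ex_RInt_const |].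
      intros x Hx. apply Hv; lra.
    + rewrite RInt_const. change (scal (B - A) (v A)) with ((B - A) * v A). lra.
  - rewrite Rmin_right, Rmax_left in Hv by lra.
    assert (HBA : ex_RInt v B A) by (apply ex_RInt_swap; exact Hint).
    assert (Hlow : RInt (fun _ => v A) B A <= RInt v B A).
    { apply RInt_le; [lra | apply ex_RInt_const | exact HBA |].
      intros x Hx. apply Hv; lra. }
    rewrite RInt_const in Hlow.
    change (scal (A - B) (v A)) with ((A - B) * v A) in Hlow.
    rewrite <- (opp_RInt_swap v B A HBA). change (- RInt v B A <= v A * (B - A)). lra.
Qed.

Theorem theorem1 (f vstar : R -> R -> R) (lam : R) (W : Type) (loss : W -> R) :
  0 < lam ->
  SP_regularizer f vstar ->
  (forall w, 0 <= loss w) ->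
  forall wstar w : W,
    F_lam vstar lam (loss w) <=
    F_lam vstar lam (loss wstar) + vstar (loss wstar) lam * (loss w - loss wstar).
Proof.
  intros Hlam [_ [_ [Hweight _]]] Hloss wstar w.
  destruct (Hweight lam Hlam) as [Hdec _].
  unfold F_lam. set (v := fun x => vstar x lam).
  assert (Hv : forall a b, 0 <= a -> nonincreasing_on v a b).
  { intros a b Ha x y Hx Hxy Hy. apply Hdec; lra. }
  assert (Hint : forall a b, 0 <= a -> 0 <= b -> ex_RInt v a b).
  { intros a b Ha Hb. destruct (Rle_dec a b).
    - apply ex_RInt_nonincreasing, Hv; lra.
    - apply ex_RInt_swap, ex_RInt_nonincreasing, Hv; lra. }
  pose proof (Hloss wstar) as HA. pose proof (Hloss w) as HB.
  rewrite <- (RInt_Chasles v 0 (loss wstar) (loss w)) by (apply Hint; lra).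
  pose proof (RInt_le_tangent v (loss wstar) (loss w) (Hint _ _ HA HB)
                (Hv _ _ (Rmin_glb _ _ _ HA HB))) as Htangent.
  simpl. unfold plus; simpl. unfold v in *. lra.
Qed.
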